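(* Let $G$ be a graph whose vertex set is partitioned into three cliques $A_1,A_2,A_3$ (equivalently, $G$ is the complement of a 3-partite graph with color classes $A_1,A_2,A_3$). If the vertex set of $G$ can be partitioned into triangles, then there is a partition of the vertex set of $G$ into triangles such that, for each $i\in\{1,2,3\}$, at most $14$ vertices of $A_i$ lie in triangles of the partition that are not entirely contained in $A_i$. *)

From mathcomp Require Import all_boot.
Set Implicit Arguments. Unset Strict Implicit. Unset Printing Implicit Defensive.

Definition simple_graph (T : finType) (e : rel T) : Prop :=
  symmetric e /\ irreflexive e.

Definition is_clique (T : finType) (e : rel T) (S : {set T}) : Prop :=
  forall x y, x \in S -> y \in S -> x != y -> e x y.

Definition is_triangle (T : finType) (e : rel T) (B : {set T}) : Prop :=
  #|B| = 3 /\ is_clique e B.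

Definition triangle_partition (T : finType) (e : rel T) (P : {set {set T}}) : Prop :=
  partition P [set: T] /\ forall B, B \in P -> is_triangle e B.

(* Call a triangle mixed if it lies in none of the cliques A_j, and record its
   profile (|B :&: A_0|, |B :&: A_1|, |B :&: A_2|): three numbers in {0,1,2}
   summing to 3, so there are seven profiles.  If three mixed triangles share a
   profile, their union meets every A_j in a multiple of 3 vertices, hence can
   be re-partitioned into triangles inside the cliques, which strictly lowers
   the number of mixed triangles.  In a partition minimising that number every
   profile occurs at most twice, so at most 2 * (sum of the i-th coordinates
   of the seven profiles) = 2 * 7 = 14 vertices of A_i lie in mixed triangles. *)

From mathcomp Require Import all_boot zify.
Set Implicit Arguments. Unset Strict Implicit. Unset Printing Implicit Defensive.

Section SetPartitions.

Variable T : finType.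
Implicit Types (P Q W : {set {set T}}) (D E S : {set T}).

Lemma exists_subset_card S n : n <= #|S| -> exists2 X : {set T}, X \subset S & #|X| = n.
Proof.
elim: n => [|n IH] leS; first by exists set0; rewrite ?sub0set ?cards0.
have [X sXS cardX] := IH (ltnW leS).
have /set0Pn[x /setDP[xS xNX]] : S :\: X != set0.
  by rewrite -card_gt0 cardsD (setIidPr sXS) cardX subn_gt0.
exists (x |: X); first by rewrite subUset sub1set xS.
by rewrite cardsU1 xNX cardX.
Qed.

Lemma card_cover_setI Q S : trivIset Q -> #|cover Q :&: S| = \sum_(B in Q) #|B :&: S|.
Proof.
move=> tiQ; rewrite -sum1_card (eq_bigl (fun x => (x \in cover Q) && (x \in S))).
  rewrite big_trivIset_cond //; apply: eq_bigr => B _.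
  by rewrite -sum1_card; apply: eq_bigl => x; rewrite inE.
by move=> x; rewrite inE.
Qed.

Lemma partitionU P Q D E :
  partition P D -> partition Q E -> [disjoint D & E] -> partition (P :|: Q) (D :|: E).
Proof.
case/and3P=> /eqP <- tiP P0 /and3P[/eqP <- tiQ Q0] disPQ.
by rewrite /partition /cover bigcup_setU eqxx trivIsetU // inE negb_or P0 Q0.
Qed.

Lemma partitionD P D W :
  partition P D -> W \subset P -> partition (P :\: W) (D :\: cover W).
Proof.
case/and3P=> /eqP <- tiP P0 sWP.
rewrite /partition trivIsetD // inE negb_and P0 orbT !andbT.
apply/eqP/setP => x; apply/bigcupP/setDP => [[B /setDP[BP BNW] xB]|].
  split; first by apply/bigcupP; exists B.
  apply/bigcupP => -[C CW xC]; move: BNW.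
  by rewrite -(def_pblock tiP BP xB) (def_pblock tiP (subsetP sWP C CW) xC) CW.
move=> [/bigcupP[B BP xB] xNW]; exists B => //; rewrite inE BP andbT.
by apply: contra xNW => BW; apply/bigcupP; exists B.
Qed.

Lemma partition_replace P D W Q :
  partition P D -> W \subset P -> partition Q (cover W) ->
  partition ((P :\: W) :|: Q) D.
Proof.
move=> partP sWP partQ.
have sWD : cover W \subset D.
  by apply/bigcupsP => B BW; apply: partitionS partP (subsetP sWP B BW).
rewrite -[X in partition _ X](setID D (cover W)) (setIidPr sWD) [X in partition _ X]setUC.
apply: partitionU (partitionD partP sWP) partQ _.
by rewrite disjoints_subset setDE subsetIr.
Qed.

Lemma partition_bigcup (I : finType) (D : I -> {set T}) (Q : I -> {set {set T}}) :
  (forall i j, i != j -> [disjoint D i & D j]) -> (forall i, partition (Q i) (D i)) ->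
  partition (\bigcup_i Q i) (\bigcup_i D i).
Proof.
move=> disD partQ; apply/and3P; split.
- apply/eqP/setP => x; apply/bigcupP/bigcupP => [[B /bigcupP[i _ BQ] xB]|[i _]].
    by exists i => //; rewrite -(cover_partition (partQ i)); apply/bigcupP; exists B.
  rewrite -(cover_partition (partQ i)) => /bigcupP[B BQ xB].
  by exists B => //; apply/bigcupP; exists i.
- apply/trivIsetP => B C /bigcupP[i _ BQ] /bigcupP[j _ CQ] neqBC.
  have [eqij|neqij] := eqVneq i j.
    rewrite -eqij in CQ; exact: trivIsetP (partition_trivIset (partQ i)) B C BQ CQ neqBC.
  exact: disjointW (partitionS (partQ i) BQ) (partitionS (partQ j) CQ) (disD i j neqij).
- by apply/bigcupP => -[i _]; rewrite (partition0 (partQ i)).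
Qed.

End SetPartitions.

Section CliqueTriangles.

Variables (T : finType) (e : rel T).

Lemma is_clique_subset (C D : {set T}) : D \subset C -> is_clique e C -> is_clique e D.
Proof. by move=> /subsetP sDC cliqueC x y /sDC xC /sDC yC; apply: cliqueC. Qed.

Lemma clique_triangle_partition (C : {set T}) :
  is_clique e C -> 3 %| #|C| ->
  exists2 Q : {set {set T}}, partition Q C & {in Q, forall X, is_triangle e X}.
Proof.
have [n] := ubnP #|C|; elim: n C => // n IH C ltCn cliqueC dvdC.
have [->|nzC] := eqVneq C set0.
  by exists set0; rewrite ?partition_set0 // => X; rewrite inE.
have [X sXC cardX] : exists2 X : {set T}, X \subset C & #|X| = 3.
  by apply: exists_subset_card; apply: dvdn_leq dvdC; rewrite card_gt0.
have cardCX : #|C :\: X| = #|C| - 3 by rewrite cardsD (setIidPr sXC) cardX.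
have [Q partQ triQ] : exists2 Q : {set {set T}},
    partition Q (C :\: X) & {in Q, forall X, is_triangle e X}.
  apply: IH; first by rewrite cardCX; move: ltCn cardX (subset_leq_card sXC); lia.
    by apply: is_clique_subset cliqueC; apply: subsetDl.
  by rewrite cardCX dvdn_sub.
exists (X |: Q).
  rewrite -[C](setID C X) (setIidPr sXC); apply: partitionU1 partQ _ _.
    by rewrite -card_gt0 cardX.
  by rewrite disjoint_sym disjoints_subset setDE subsetIr.
move=> Y /setU1P[->|/triQ //]; split=> //.
exact: is_clique_subset cliqueC.
Qed.

End CliqueTriangles.

Definition coord (p : 'I_3 * 'I_3 * 'I_3) (i : 'I_3) : nat :=
  nth 0 [:: val p.1.1; val p.1.2; val p.2] i.

Lemma sum_coord_profiles (i : 'I_3) : \sum_(p | \sum_j coord p j == 3) coord p i = 7.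
Proof.
rewrite big_mkcond.
pose G a b c := let p := (a, b, c) in if \sum_j coord p j == 3 then coord p i else 0.
rewrite (eq_bigr (fun p => G p.1.1 p.1.2 p.2)); last by case=> [[]].
rewrite -(pair_bigA _ (fun ab c => G ab.1 ab.2 c)).
rewrite -(pair_bigA _ (fun a b => \sum_c G a b c)).
by case: i => [[|[|[|//]]] ?] in G *; rewrite /G !big_ord_recr !big_ord0.
Qed.

Section ThreeCliques.

Variables (T : finType) (e : rel T) (A : 'I_3 -> {set T}).
Hypothesis A_disjoint : forall i j : 'I_3, i != j -> [disjoint A i & A j].
Hypothesis A_cover : forall x : T, exists i : 'I_3, x \in A i.
Hypothesis A_clique : forall i : 'I_3, is_clique e (A i).

Implicit Types (B S : {set T}) (P Q W : {set {set T}}).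

Definition mixed B := [forall j, ~~ (B \subset A j)].

(* Only meaningful for mixed triangles, whose coordinates are all below 3. *)
Definition profile B : 'I_3 * 'I_3 * 'I_3 :=
  (inord #|B :&: A (inord 0)|, inord #|B :&: A (inord 1)|, inord #|B :&: A (inord 2)|).

Definition mixed_blocks P := [set B in P | mixed B].

Definition profile_class P p := [set B in P | mixed B & profile B == p].

Definition crossing_vertices P i := [set v in A i | ~~ (pblock P v \subset A i)].

Lemma card_setI_parts B : #|B| = \sum_j #|B :&: A j|.
Proof.
have coverB : \bigcup_j (B :&: A j) = B.
  apply/setP => x; apply/bigcupP/idP => [[j _ /setIP[] //]|xB].
  by have [j xA] := A_cover x; exists j; rewrite ?inE ?xB.
rewrite -{1}coverB -sum1_card partition_disjoint_bigcup; last first.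
  move=> i j /A_disjoint; exact: disjointW (subsetIr _ _) (subsetIr _ _).
by apply: eq_bigr => j _; rewrite sum1_card.
Qed.

Lemma mixed_card_setI B j : #|B| = 3 -> mixed B -> #|B :&: A j| < 3.
Proof.
move=> cardB /forallP/(_ j); apply: contraNT; rewrite -leqNgt -cardB => leB.
have eqB : B :&: A j = B by apply/eqP; rewrite eqEcard subsetIl leB.
by rewrite -eqB subsetIr.
Qed.

Lemma coord_profile B i : #|B| = 3 -> mixed B -> coord (profile B) i = #|B :&: A i|.
Proof.
move=> cardB mixB; have lt3 j := mixed_card_setI j cardB mixB.
by case: i => [[|[|[|//]]] ?]; rewrite /coord /= inordK //;
  congr #|B :&: A _|; apply/val_inj; rewrite /= inordK.
Qed.

Lemma sum_coord_profile B : #|B| = 3 -> mixed B -> \sum_j coord (profile B) j = 3.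
Proof.
move=> cardB mixB; transitivity #|B|; last exact: cardB.
by rewrite card_setI_parts; apply: eq_bigr => j _; rewrite coord_profile.
Qed.

Lemma mixed_of_not_subset B v i : v \in B -> v \in A i -> ~~ (B \subset A i) -> mixed B.
Proof.
move=> vB vAi notsub; apply/forallP => j; apply: contra notsub => sBAj.
have [<-//|neqji] := eqVneq j i.
by have := subsetP sBAj v vB; rewrite (disjointFl (A_disjoint neqji) vAi).
Qed.

Lemma pure_triangle_partition S : (forall j, 3 %| #|S :&: A j|) ->
  exists2 Q, partition Q S & {in Q, forall X, is_triangle e X /\ ~~ mixed X}.
Proof.
move=> dvdS.
have /fin_all_exists2[Q partQ triQ] : forall j, exists2 Q,
    partition Q (S :&: A j) & {in Q, forall X, is_triangle e X}.
  move=> j; apply: clique_triangle_partition (dvdS j).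
  exact: is_clique_subset (subsetIr _ _) (@A_clique j).
exists (\bigcup_j Q j).
  have -> : S = \bigcup_j (S :&: A j).
    by rewrite -big_distrr /=; apply/esym/setIidPl/subsetP => x _;
      have [j xA] := A_cover x; apply/bigcupP; exists j.
  apply: partition_bigcup partQ => i j /A_disjoint.
  exact: disjointW (subsetIr _ _) (subsetIr _ _).
move=> X /bigcupP[j _ XQ]; split; first exact: triQ XQ.
apply/forallPn; exists j; rewrite negbK.
exact: subset_trans (partitionS (partQ j) XQ) (subsetIr _ _).
Qed.

Lemma card_crossing_vertices_le P i : triangle_partition e P ->
  (forall p, #|profile_class P p| <= 2) -> #|crossing_vertices P i| <= 14.
Proof.
move=> [partP triP] small.
have mixedP B : B \in mixed_blocks P -> #|B| = 3 /\ mixed B.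
  by rewrite inE => /andP[/triP[]].
have sub : crossing_vertices P i \subset cover (mixed_blocks P) :&: A i.
  apply/subsetP => v; rewrite inE => /andP[vA notsub].
  have vP : v \in cover P by rewrite (cover_partition partP) inE.
  rewrite inE vA andbT; apply/bigcupP; exists (pblock P v); last by rewrite mem_pblock.
  by rewrite inE pblock_mem //= (mixed_of_not_subset _ vA notsub) // mem_pblock.
apply: (leq_trans (subset_leq_card sub)).
rewrite card_cover_setI; last first.
  by rewrite (trivIsetS _ (partition_trivIset partP)) // /mixed_blocks setIdE subsetIl.
rewrite (partition_big profile (fun p => \sum_j coord p j == 3)) /=; last first.
  by move=> B /mixedP[cardB mB]; rewrite sum_coord_profile.
rewrite -[14]/(2 * 7) -(sum_coord_profiles i) big_distrr /=; apply: leq_sum => p _.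
rewrite (eq_bigr (fun _ => coord p i)); last first.
  by move=> B /andP[/mixedP[cardB mB] /eqP <-]; rewrite coord_profile.
rewrite (eq_bigl (mem (profile_class P p))) ?sum_nat_const ?leq_mul //.
by move=> B; rewrite !inE andbA.
Qed.

Lemma retile_profile_class P W p : triangle_partition e P ->
  W \subset profile_class P p -> #|W| = 3 ->
  exists P', triangle_partition e P' /\ #|mixed_blocks P'| < #|mixed_blocks P|.
Proof.
move=> [partP triP] sWC cardW.
have WC B : B \in W -> [/\ B \in P, mixed B & profile B = p].
  by move/(subsetP sWC); rewrite inE => /and3P[? ? /eqP].
have sWP : W \subset P by apply/subsetP => B /WC[].
have dvdW j : 3 %| #|cover W :&: A j|.
  rewrite card_cover_setI; last exact: trivIsetS sWP (partition_trivIset partP).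
  rewrite (eq_bigr (fun _ => coord p j)) ?sum_nat_const ?cardW ?dvdn_mulr //.
  by move=> B /WC[BP mB <-]; rewrite coord_profile //; have [] := triP B BP.
have [Q partQ pureQ] := pure_triangle_partition dvdW.
exists ((P :\: W) :|: Q); split.
  split; first exact: partition_replace partP sWP partQ.
  by move=> B /setUP[/setDP[/triP] | /pureQ[]].
have [B0 B0W] : exists B0, B0 \in W by apply/set0Pn; rewrite -card_gt0 cardW.
have [B0P mB0 _] := WC B0 B0W.
apply: (leq_ltn_trans _ (proper_card (properD1 (_ : B0 \in mixed_blocks P)))); last first.
  by rewrite inE B0P.
apply: subset_leq_card; apply/subsetP => B.
rewrite !inE => /andP[/orP[/andP[BNW BP] | BQ] mB].
  by rewrite BP mB !andbT; apply: contraNneq BNW => ->.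
by have [_] := pureQ B BQ; rewrite mB.
Qed.

Lemma exists_fewer_mixed P i : triangle_partition e P -> 14 < #|crossing_vertices P i| ->
  exists P', triangle_partition e P' /\ #|mixed_blocks P'| < #|mixed_blocks P|.
Proof.
move=> tpP big.
have [p bigp] : exists p, 2 < #|profile_class P p|.
  apply/existsP; apply: contraLR big => /existsPn small; rewrite -leqNgt.
  by apply: card_crossing_vertices_le => // p; rewrite leqNgt small.
have [W sWC cardW] := exists_subset_card bigp.
exact: retile_profile_class tpP sWC cardW.
Qed.

End ThreeCliques.

Theorem mainTheorem13 (T : finType) (e : rel T) (A : 'I_3 -> {set T}) :
  simple_graph e ->
  (forall i j : 'I_3, i != j -> [disjoint A i & A j]) ->
  (forall x : T, exists i : 'I_3, x \in A i) ->
  (forall i : 'I_3, is_clique e (A i)) ->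
  (exists P : {set {set T}}, triangle_partition e P) ->
  exists P : {set {set T}}, triangle_partition e P /\
    forall i : 'I_3,
      #|[set v in A i | ~~ (pblock P v \subset A i)]| <= 14.
Proof.
move=> _ A_disjoint A_cover A_clique [P0 tpP0].
have [n] := ubnP #|mixed_blocks A P0|; elim: n P0 tpP0 => // n IH P tpP ltPn.
have [/forallP small|/forallPn[i]] :=
  boolP [forall i, #|crossing_vertices A P i| <= 14].
  by exists P.
rewrite -ltnNge => big.
have [P' [tpP' ltP']] := exists_fewer_mixed A_disjoint A_cover A_clique tpP big.
exact: IH P' tpP' (leq_trans ltP' ltPn).
Qed.
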